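(* Let $\Gamma$ be a geometrically finite Fuchsian group such that $\infty\notin\widehat{\mathbb{R}}_{\mathrm{st}}$. Suppose $\Gamma$ is not conjugate in $\mathrm{PSL}_2(\mathbb{R})$ to any group generated by $z\mapsto -1/z$ and $z\mapsto \lambda z$ with $\lambda>1$, and suppose $\Lambda(\Gamma)$ consists of more than one point. For $g\in\Gamma\setminus\Gamma_\infty$ let $\mathscr{W}(g)\subseteq\mathbb{R}$ be the open interval whose endpoints are the two endpoints in $\mathbb{R}$ of the isometric sphere $\mathrm{I}(g)$. Then for every $g\in\Gamma\setminus\Gamma_\infty$ we have $\mathscr{W}(g)\cap\Lambda(\Gamma)\neq\varnothing$.
   Context: A Fuchsian group is a discrete subgroup of $\mathrm{PSL}_2(\mathbb{R})$ acting on the upper half-plane $\mathbb{H}$ and on $\widehat{\mathbb{R}}=\mathbb{R}\cup\{\infty\}$ by linear fractional transformations. $\Lambda(\Gamma)$ is its limit set and $\widehat{\mathbb{R}}_{\mathrm{st}}$ is $\Lambda(\Gamma)$ with all parabolic fixed points of $\Gamma$ removed. $\Gamma_\infty$ denotes the stabilizer of $\infty$ in $\Gamma$ (trivial or generated by a parabolic translation $z\mapsto z+\lambda$, under the assumption $\infty\notin\widehat{\mathbb{R}}_{\mathrm{st}}$). For $g=\begin{bmatrix}a&b\\c&d\end{bmatrix}\in\Gamma\setminus\Gamma_\infty$ (so $c\ne0$), the isometric sphere is $\mathrm{I}(g)=\{z\in\mathbb{H}: |z+\tfrac{d}{c}|=\tfrac{1}{|c|}\}$; thus $\mathscr{W}(g)=(-\tfrac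 dc-\tfrac1{|c|},\,-\tfrac dc+\tfrac1{|c|})$. *)

From Stdlib Require Import Reals Lra List.
Open Scope R_scope.

(* 2x2 real matrices; SL2(R) = those with det 1. A subgroup of PSL2(R) is
   represented by its full preimage in SL2(R) (a subgroup containing -I). *)
Record mat := Mat { ma : R; mb : R; mc : R; md : R }.

Definition det (g : mat) : R := ma g * md g - mb g * mc g.
Definition mul (g h : mat) : mat :=
  Mat (ma g * ma h + mb g * mc h) (ma g * mb h + mb g * md h)
      (mc g * ma h + md g * mc h) (mc g * mb h + md g * md h).
Definition inv (g : mat) : mat := Mat (md g) (- mb g) (- mc g) (ma g).
Definition Id2 : mat := Mat 1 0 0 1.
Definition negId2 : mat := Mat (-1) 0 0 (-1).
Definition neg (g : mat) : mat := Mat (- ma g) (- mb g) (- mc g) (- md g).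

Definition Fuchsian (G : mat -> Prop) : Prop :=
  (forall g, G g -> det g = 1) /\
  G Id2 /\
  (forall g h, G g -> G h -> G (mul g h)) /\
  (forall g, G g -> G (inv g)) /\
  (forall g, G g -> G (neg g)) /\
  (exists eps, 0 < eps /\ forall g, G g ->
      Rabs (ma g - 1) < eps -> Rabs (mb g) < eps ->
      Rabs (mc g) < eps -> Rabs (md g - 1) < eps -> g = Id2).

(* Points of the upper half-plane: (x, y) = x + i y with y > 0. *)
Definition inH (z : R * R) : Prop := 0 < snd z.

Definition act (g : mat) (z : R * R) : R * R :=
  let x := fst z in let y := snd z in
  let n := (mc g * x + md g)^2 + (mc g * y)^2 in
  ((ma g * mc g * (x^2 + y^2) + (ma g * md g + mb g * mc g) * x + mb g * md g) / n,
   y / n).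

(* hyperbolic distance on H: cosh d(z,w) = 1 + |z-w|^2/(2 Im z Im w) *)
Definition hcosh (z w : R * R) : R :=
  1 + ((fst z - fst w)^2 + (snd z - snd w)^2) / (2 * snd z * snd w).
Definition hdist (z w : R * R) : R :=
  let t := hcosh z w in ln (t + sqrt (t^2 - 1)).

(* Extended real line: None = infinity. *)
Definition Rhat := option R.

Definition ipt : R * R := (0, 1).

Definition limit_point (G : mat -> Prop) (x : Rhat) : Prop :=
  match x with
  | Some r => forall eps, 0 < eps -> exists g, G g /\
       (fst (act g ipt) - r)^2 + (snd (act g ipt))^2 < eps
  | None => forall M, exists g, G g /\
       (fst (act g ipt))^2 + (snd (act g ipt))^2 > M
  end.

Definition fixes (g : mat) (x : Rhat) : Prop :=
  match x with
  | Some r => mc g * r^2 + (md g - ma g) * r - mb g = 0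
  | None => mc g = 0
  end.

Definition parabolic (g : mat) : Prop :=
  (ma g + md g)^2 = 4 /\ ~ (mb g = 0 /\ mc g = 0).

Definition parabolic_fixed_point (G : mat -> Prop) (x : Rhat) : Prop :=
  exists g, G g /\ parabolic g /\ fixes g x.

Definition in_Rst (G : mat -> Prop) (x : Rhat) : Prop :=
  limit_point G x /\ ~ parabolic_fixed_point G x.

(* Geometrically finite: some Dirichlet polygon
   D_p = {z in H | forall g in G, d(z,p) <= d(z, g p)} is finite-sided,
   i.e. cut out by finitely many of its defining half-planes. *)
Definition geometrically_finite (G : mat -> Prop) : Prop :=
  exists p : R * R, inH p /\
    (forall g, G g -> act g p = p -> g = Id2 \/ g = negId2) /\
    exists L : list mat, (forall h, In h L -> G h) /\
      forall z, inH z ->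
        (forall h, In h L -> hdist z p <= hdist z (act h p)) ->
        forall g, G g -> hdist z p <= hdist z (act g p).

(* Preimage in SL2(R) of the subgroup of PSL2(R) generated by
   z |-> -1/z and z |-> lambda z. *)
Inductive gen_SD (lam : R) : mat -> Prop :=
  | gen_id : gen_SD lam Id2
  | gen_negid : gen_SD lam negId2
  | gen_S : gen_SD lam (Mat 0 (-1) 1 0)
  | gen_D : gen_SD lam (Mat (sqrt lam) 0 0 (/ sqrt lam))
  | gen_mul : forall g h, gen_SD lam g -> gen_SD lam h -> gen_SD lam (mul g h)
  | gen_inv : forall g, gen_SD lam g -> gen_SD lam (inv g).

Definition conjugate (G H : mat -> Prop) : Prop :=
  exists h, det h = 1 /\ forall m, G m <-> H (mul (mul h m) (inv h)).

(* open interval W(g) between the endpoints of the isometric sphere I(g) *)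
Definition in_W (g : mat) (x : R) : Prop :=
  - md g / mc g - 1 / Rabs (mc g) < x < - md g / mc g + 1 / Rabs (mc g).

(* If infinity is a limit point, so is its image [- d / c] under [g^-1], the centre of
   W(g).  Otherwise the limit set is a G-invariant subset of R; suppose it misses
   W(g) = {x | (c x + d)^2 < 1}, i.e. [g] does not expand it.  For a limit point z the
   numbers u_k = c_k z + d_k, read off the bottom row of g^k (k in Z), satisfy
   u_(k+1) = tr(g) u_k - u_(k-1) by Cayley-Hamilton, and |u_k| is nondecreasing by the
   chain rule.  Such a two-sided sequence has a constant Cassini invariant, which a growth
   argument forces to vanish when |tr g| >= 2; then every limit point is the fixed point of
   g at which |c z + d| >= 1, and there is only one, contradicting |Lambda| >= 2.  When
   |tr g| < 2 the same argument makes u_k^2 constant, so tr g = 0 and Lambda = {(a +- 1)/c}.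
   Conjugating these two points to 0 and infinity turns G into a discrete group of
   diagonal and antidiagonal matrices containing z |-> -1/z; it is finite (impossible, G
   has limit points) or generated by z |-> -1/z and z |-> lambda z, which is excluded. *)

From Stdlib Require Import Reals Lra Psatz ZArith Lia Classical.
Open Scope R_scope.

Lemma pow2_gt_0 (x : R) : x <> 0 -> 0 < x ^ 2.
Proof. intros Hx. rewrite <- Rsqr_pow2. exact (Rsqr_pos_lt x Hx). Qed.

Lemma Rdiv_lt_iff (a b c : R) : 0 < b -> a / b < c <-> a < c * b.
Proof.
  intros Hb. replace a with (a / b * b) at 2 by (field; lra).
  split; intros H; [apply Rmult_lt_compat_r | apply Rmult_lt_reg_r with b]; assumption.
Qed.

Lemma Rlt_div_iff (a b c : R) : 0 < b -> a < c / b <-> a * b < c.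
Proof.
  intros Hb. replace c with (c / b * b) at 2 by (field; lra).
  split; intros H; [apply Rmult_lt_compat_r | apply Rmult_lt_reg_r with b]; assumption.
Qed.

Lemma sq_shift_lower_bound (c K u v : R) : c^2 * (u^2 + v^2) <= K^2/4 ->
  K^2/4 <= (c * u + K)^2 + (c * v)^2.
Proof. intros H. pose proof (pow2_ge_0 (2 * c * u + K)). pose proof (pow2_ge_0 (c * v)). nra. Qed.

Lemma pow_unbounded (x b : R) : 1 < x -> exists n, b < x ^ n.
Proof.
  intros Hx. destruct (Pow_x_infinity x ltac:(rewrite Rabs_right; lra) (b + 1)) as [N HN].
  exists N. specialize (HN N (le_n N)).
  rewrite Rabs_right in HN by (apply Rle_ge, pow_le; lra). lra.
Qed.

Lemma Rabs_add_mul_le (a b c d : R) : Rabs (a * b + c * d) <= Rabs a * Rabs b + Rabs c * Rabs d.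
Proof. rewrite <- !Rabs_mult. apply Rabs_triang. Qed.

Lemma mat_ext (x y : mat) :
  ma x = ma y -> mb x = mb y -> mc x = mc y -> md x = md y -> x = y.
Proof. destruct x, y; cbn; intros; subst; reflexivity. Qed.

Ltac mat_ring := apply mat_ext; cbn [ma mb mc md mul inv Id2 negId2 neg]; ring.

Lemma mul_assoc (x y z : mat) : mul (mul x y) z = mul x (mul y z).
Proof. destruct x, y, z; unfold mul; mat_ring. Qed.
Lemma mul_1_l (x : mat) : mul Id2 x = x.
Proof. destruct x; unfold mul; mat_ring. Qed.
Lemma mul_1_r (x : mat) : mul x Id2 = x.
Proof. destruct x; unfold mul; mat_ring. Qed.
Lemma inv_mul_distr (x y : mat) : inv (mul x y) = mul (inv y) (inv x).
Proof. destruct x, y; unfold mul, inv; mat_ring. Qed.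
Lemma inv_involutive (x : mat) : inv (inv x) = x.
Proof. destruct x; unfold inv; mat_ring. Qed.
Lemma neg_mul_l (x y : mat) : mul (neg x) y = neg (mul x y).
Proof. destruct x, y; unfold mul, neg; mat_ring. Qed.
Lemma neg_mul_r (x y : mat) : mul x (neg y) = neg (mul x y).
Proof. destruct x, y; unfold mul, neg; mat_ring. Qed.
Lemma neg_eq_mul (x : mat) : neg x = mul negId2 x.
Proof. destruct x; unfold mul, neg, negId2; mat_ring. Qed.
Lemma negId2_eq : negId2 = neg Id2.
Proof. unfold negId2, neg; mat_ring. Qed.

Lemma mul_inv_r (x : mat) : det x = 1 -> mul x (inv x) = Id2.
Proof. destruct x; unfold det, mul, inv; cbn; intros; apply mat_ext; cbn; lra. Qed.
Lemma mul_inv_l (x : mat) : det x = 1 -> mul (inv x) x = Id2.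
Proof. destruct x; unfold det, mul, inv; cbn; intros; apply mat_ext; cbn; lra. Qed.
Lemma det_mul (x y : mat) : det (mul x y) = det x * det y.
Proof. destruct x, y; unfold det, mul; cbn; ring. Qed.
Lemma det_inv (x : mat) : det (inv x) = det x.
Proof. destruct x; unfold det, inv; cbn; ring. Qed.

Definition conjg (h x : mat) : mat := mul (mul h x) (inv h).

Section Conjugation.
Variable h : mat.
Hypothesis det_h : det h = 1.

Lemma conjg_mul (x y : mat) : conjg h (mul x y) = mul (conjg h x) (conjg h y).
Proof.
  unfold conjg. rewrite !mul_assoc, <- (mul_assoc (inv h) h), mul_inv_l, mul_1_l by exact det_h.
  reflexivity.
Qed.
Lemma conjg_inv (x : mat) : conjg h (inv x) = inv (conjg h x).
Proof. unfold conjg. rewrite !inv_mul_distr, inv_involutive, mul_assoc. reflexivity. Qed.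
Lemma conjg_neg (x : mat) : conjg h (neg x) = neg (conjg h x).
Proof. unfold conjg. rewrite neg_mul_r, neg_mul_l. reflexivity. Qed.
Lemma conjg_Id : conjg h Id2 = Id2.
Proof. unfold conjg. rewrite mul_1_r. exact (mul_inv_r h det_h). Qed.
Lemma conjgK (x : mat) : conjg (inv h) (conjg h x) = x.
Proof.
  unfold conjg. rewrite inv_involutive, !mul_assoc, mul_inv_l, mul_1_r by exact det_h.
  rewrite <- mul_assoc, mul_inv_l, mul_1_l by exact det_h. reflexivity.
Qed.
Lemma conjgVK (x : mat) : conjg h (conjg (inv h) x) = x.
Proof.
  unfold conjg. rewrite inv_involutive, !mul_assoc, mul_inv_r, mul_1_r by exact det_h.
  rewrite <- mul_assoc, mul_inv_r, mul_1_l by exact det_h. reflexivity.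
Qed.
Lemma det_conjg (x : mat) : det (conjg h x) = det x.
Proof. unfold conjg. rewrite !det_mul, det_inv, det_h. ring. Qed.

End Conjugation.

(** * The action on the upper half-plane and on its boundary *)

(* [mob m] is the action of [m] on R, with derivative [1 / jfac m r ^ 2]; at the pole
   [jfac m r = 0] the division returns a junk value. *)
Definition jfac (m : mat) (r : R) : R := mc m * r + md m.
Definition mob (m : mat) (r : R) : R := (ma m * r + mb m) / jfac m r.

Lemma in_W_of_jfac_sq_lt_1 (g : mat) (x : R) : mc g <> 0 -> jfac g x ^2 < 1 -> in_W g x.
Proof.
  intros Hc Hx. unfold in_W.
  assert (Hj : Rabs (jfac g x) < 1) by (apply Rabs_def1; nra).
  assert (Habs : 0 < Rabs (mc g)) by (apply Rabs_pos_lt; exact Hc).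
  replace (jfac g x) with (mc g * (x + md g / mc g)) in Hj by (unfold jfac; field; exact Hc).
  rewrite Rabs_mult in Hj.
  assert (Hx' : Rabs (x + md g / mc g) < 1 / Rabs (mc g)) by (apply Rlt_div_iff; lra).
  apply Rabs_def2 in Hx'. unfold Rdiv in *. lra.
Qed.

Lemma mob_injective (m : mat) (r s : R) : det m = 1 -> jfac m r <> 0 -> jfac m s <> 0 ->
  mob m r = mob m s -> r = s.
Proof.
  intros Hd Hr Hs E.
  assert (Hsub : mob m r - mob m s = (r - s) / (jfac m r * jfac m s)).
  { rewrite <- (Rmult_1_l (r - s)), <- Hd. unfold mob, jfac, det in *. field. split; assumption. }
  rewrite E, Rminus_diag in Hsub.
  assert (Hrs : (r - s) = 0 * (jfac m r * jfac m s)) by (rewrite Hsub; field; split; assumption).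
  lra.
Qed.

Lemma mob_eq (m : mat) (r s : R) : jfac m r <> 0 -> mob m r = s -> ma m * r + mb m - s * jfac m r = 0.
Proof. intros Hr <-. unfold mob. field. exact Hr. Qed.

Lemma jfac_mul (g h : mat) (z : R) : jfac h z <> 0 ->
  jfac (mul g h) z = jfac g (mob h z) * jfac h z.
Proof. unfold mob, jfac, mul; cbn. intros Hz. field. exact Hz. Qed.

Lemma jfac_cayley_hamilton (g X : mat) (z : R) : det g = 1 ->
  jfac (mul g (mul g X)) z = (ma g + md g) * jfac (mul g X) z - jfac X z.
Proof.
  intros Hg. rewrite <- (Rmult_1_l (jfac X z)), <- Hg.
  destruct g, X; unfold jfac, mul, det; cbn. ring.
Qed.

Lemma act_den_pos (h : mat) (x y : R) : det h = 1 -> 0 < y ->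
  0 < (mc h * x + md h)^2 + (mc h * y)^2.
Proof.
  destruct h as [a b c d]; unfold det; cbn; intros Hd Hy.
  destruct (Req_dec c 0) as [->|Hc].
  - assert (d <> 0) by (intros ->; lra). nra.
  - assert (0 < (c * y)^2)
      by (apply pow2_gt_0, Rmult_integral_contrapositive_currified; [exact Hc | lra]).
    pose proof (pow2_ge_0 (c * x + d)). lra.
Qed.

Lemma act_im_pos (h : mat) (z : R * R) : det h = 1 -> inH z -> inH (act h z).
Proof.
  destruct z as [x y]; unfold inH, act; cbn [fst snd]; intros Hd Hy.
  apply Rdiv_lt_0_compat; [exact Hy | exact (act_den_pos h x y Hd Hy)].
Qed.

Lemma act_ipt (m : mat) : det m = 1 ->
  act m ipt = ((ma m * mc m + mb m * md m) / (mc m ^2 + md m ^2), 1 / (mc m ^2 + md m ^2)).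
Proof.
  intros Hd. pose proof (act_den_pos m 0 1 Hd Rlt_0_1) as Hn.
  unfold act, ipt; cbn [fst snd].
  replace ((mc m * 0 + md m) ^ 2 + (mc m * 1) ^ 2) with (mc m ^2 + md m ^2) in * by ring.
  f_equal; field; lra.
Qed.

Lemma act_mul_ipt (h m : mat) : det h = 1 -> det m = 1 ->
  act (mul h m) ipt = act h (act m ipt).
Proof.
  intros Hh Hm. assert (Hhm : det (mul h m) = 1) by (rewrite det_mul, Hh, Hm; ring).
  pose proof (act_den_pos m 0 1 Hm Rlt_0_1) as Nm.
  pose proof (act_den_pos (mul h m) 0 1 Hhm Rlt_0_1) as Nhm.
  rewrite (act_ipt _ Hhm), (act_ipt _ Hm).
  destruct h as [p q r s], m as [a b c d]; unfold det, act, mul in *; cbn [fst snd ma mb mc md] in *.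
  assert (N1 : c ^ 2 + d ^ 2 <> 0) by nra.
  assert (N2 : (r * a + s * c) ^ 2 + (r * b + s * d) ^ 2 <> 0) by nra.
  (* the denominator of [h] at [m i] is that of [mul h m] at [i] divided by that of [m] *)
  assert (Key : (r * (a * c + b * d) + s * (c ^ 2 + d ^ 2)) ^ 2 + (r * (a * d - b * c)) ^ 2
              = (c ^ 2 + d ^ 2) * ((r * a + s * c) ^ 2 + (r * b + s * d) ^ 2)) by ring.
  replace (1 / (c ^ 2 + d ^ 2)) with ((a * d - b * c) / (c ^ 2 + d ^ 2)) by (rewrite Hm; reflexivity).
  f_equal.
  - field. rewrite Key. repeat split; try apply Rmult_integral_contrapositive_currified; assumption.
  - rewrite <- Hm at 1. field. rewrite Key.
    repeat split; try apply Rmult_integral_contrapositive_currified; assumption.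
Qed.

Section BoundaryFormulas.
Variables (h : mat) (x y : R).
Hypothesis det_h : det h = 1.
Hypothesis y_pos : 0 < y.
Let N := (mc h * x + md h)^2 + (mc h * y)^2.

Lemma act_sqdist_mob (r : R) : jfac h r <> 0 ->
  (fst (act h (x, y)) - mob h r)^2 + snd (act h (x, y))^2
  = ((x - r)^2 + y^2) / (N * jfac h r ^2).
Proof.
  intros Hr. pose proof (act_den_pos h x y det_h y_pos) as HN.
  unfold N, act, mob, jfac in *; cbn [fst snd] in *.
  destruct h as [a b c d]; unfold det in det_h; cbn [ma mb mc md] in *.
  (* writing [y] as [det h * y] makes both sides homogeneous *)
  rewrite <- (Rmult_1_l y) at 3. rewrite <- det_h.
  transitivity ((a * d - b * c)^2 * ((x - r)^2 + y^2)
                / (((c * x + d)^2 + (c * y)^2) * (c * r + d)^2)).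
  - field. split; lra.
  - rewrite det_h. field. split; lra.
Qed.

Lemma act_sqnorm :
  fst (act h (x, y))^2 + snd (act h (x, y))^2
  = ((ma h * x + mb h)^2 + (ma h * y)^2) / N.
Proof.
  pose proof (act_den_pos h x y det_h y_pos) as HN.
  unfold N, act in *; cbn [fst snd] in *.
  destruct h as [a b c d]; unfold det in det_h; cbn [ma mb mc md] in *.
  rewrite <- (Rmult_1_l y) at 3. rewrite <- det_h. field. lra.
Qed.

Lemma act_sqdist_pole_image : mc h <> 0 ->
  (fst (act h (x, y)) - ma h / mc h)^2 + snd (act h (x, y))^2 = 1 / (mc h ^2 * N).
Proof.
  intros Hc. pose proof (act_den_pos h x y det_h y_pos) as HN.
  unfold N, act in *; cbn [fst snd] in *.
  destruct h as [a b c d]; unfold det in det_h; cbn [ma mb mc md] in *.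
  rewrite <- (Rmult_1_l y) at 3. rewrite <- det_h.
  transitivity ((a * d - b * c)^2 / (c ^2 * ((c * x + d)^2 + (c * y)^2))).
  - field. split; lra.
  - rewrite det_h, pow1. reflexivity.
Qed.

End BoundaryFormulas.

Lemma act_near_boundary (h : mat) (r eps : R) : det h = 1 -> jfac h r <> 0 -> 0 < eps ->
  exists delta, 0 < delta /\ forall x y, 0 < y -> (x - r)^2 + y^2 < delta ->
    (fst (act h (x, y)) - mob h r)^2 + snd (act h (x, y))^2 < eps.
Proof.
  intros Hd Hr He. set (K := jfac h r) in *.
  assert (HK : 0 < K^2) by (apply pow2_gt_0; exact Hr).
  pose proof (pow2_ge_0 (mc h)).
  exists (Rmin (eps * K^2 * K^2 / 4) (K^2 / (4 * (mc h ^2 + 1)))). split.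
  { assert (0 < eps * K^2 * K^2) by (apply Rmult_lt_0_compat; [apply Rmult_lt_0_compat|]; assumption).
    apply Rmin_pos; apply Rdiv_lt_0_compat; lra. }
  intros x y Hy Hxy. rewrite act_sqdist_mob by assumption. fold K.
  set (dist := (x - r)^2 + y^2) in *.
  assert (0 <= dist) by (unfold dist; pose proof (pow2_ge_0 (x - r)); pose proof (pow2_ge_0 y); lra).
  assert (H1 : dist < eps * K^2 * K^2 / 4) by (eapply Rlt_le_trans; [exact Hxy | apply Rmin_l]).
  assert (H2 : dist * (4 * (mc h ^2 + 1)) < K^2).
  { apply Rlt_div_iff; [lra|]. eapply Rlt_le_trans; [exact Hxy | apply Rmin_r]. }
  assert (HN : K^2/4 <= (mc h * x + md h)^2 + (mc h * y)^2).
  { replace (mc h * x + md h) with (mc h * (x - r) + K) by (unfold K, jfac; ring).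
    apply sq_shift_lower_bound. fold dist. nra. }
  set (N := (mc h * x + md h)^2 + (mc h * y)^2) in *.
  assert (HNK : eps * (K^2 / 4 * K^2) <= eps * (N * K^2))
    by (apply Rmult_le_compat_l, Rmult_le_compat_r; lra).
  apply Rdiv_lt_iff; [apply Rmult_lt_0_compat; lra | lra].
Qed.

Lemma act_near_pole (h : mat) (r M : R) : det h = 1 -> jfac h r = 0 ->
  exists delta, 0 < delta /\ forall x y, 0 < y -> (x - r)^2 + y^2 < delta ->
    M < fst (act h (x, y))^2 + snd (act h (x, y))^2.
Proof.
  intros Hd Hr. set (B := ma h * r + mb h).
  assert (HB : mc h * B = -1).
  { unfold B, jfac, det in *. transitivity (ma h * (mc h * r + md h) - (ma h * md h - mb h * mc h)).
    - ring.
    - rewrite Hr, Hd. ring. }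
  assert (HB2 : 0 < B^2) by (apply pow2_gt_0; intros E; rewrite E in HB; lra).
  assert (Hc2 : 0 < mc h ^2) by (apply pow2_gt_0; intros E; rewrite E in HB; lra).
  pose proof (pow2_ge_0 (ma h)).
  set (M' := Rabs M + 1). assert (HM' : 0 < M') by (unfold M'; pose proof (Rabs_pos M); lra).
  exists (Rmin (B^2 / (4 * (ma h ^2 + 1))) (B^2 / (4 * mc h ^2 * M'))). split.
  { apply Rmin_pos; apply Rdiv_lt_0_compat; nra. }
  intros x y Hy Hxy. rewrite act_sqnorm by assumption.
  set (dist := (x - r)^2 + y^2) in *.
  assert (Hdist : 0 < dist) by (unfold dist; pose proof (pow2_ge_0 (x - r)); nra).
  assert (H1 : dist * (4 * (ma h ^2 + 1)) < B^2).
  { apply Rlt_div_iff; [lra|]. eapply Rlt_le_trans; [exact Hxy | apply Rmin_l]. }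
  assert (H2 : dist * (4 * mc h ^2 * M') < B^2).
  { apply Rlt_div_iff; [nra|]. eapply Rlt_le_trans; [exact Hxy | apply Rmin_r]. }
  assert (Hnum : B^2/4 <= (ma h * x + mb h)^2 + (ma h * y)^2).
  { replace (ma h * x + mb h) with (ma h * (x - r) + B) by (unfold B; ring).
    apply sq_shift_lower_bound. fold dist. nra. }
  assert (Hden : (mc h * x + md h)^2 + (mc h * y)^2 = mc h ^2 * dist).
  { unfold jfac in Hr. unfold dist.
    replace (mc h * x + md h) with (mc h * (x - r) + (mc h * r + md h)) by ring.
    rewrite Hr. ring. }
  rewrite Hden. apply Rlt_le_trans with M'; [unfold M'; pose proof (Rle_abs M); lra|].
  apply Rlt_le, Rlt_div_iff; nra.
Qed.

Lemma act_near_infinity (h : mat) (eps : R) : det h = 1 -> mc h <> 0 -> 0 < eps ->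
  exists M, forall x y, 0 < y -> M < x^2 + y^2 ->
    (fst (act h (x, y)) - ma h / mc h)^2 + snd (act h (x, y))^2 < eps.
Proof.
  intros Hd Hc He. assert (Hc2 : 0 < mc h ^2) by (apply pow2_gt_0; exact Hc).
  set (T := 1 / (mc h ^2 * eps)).
  exists (2 * (T + md h ^2 + 1) / mc h ^2). intros x y Hy Hxy.
  rewrite act_sqdist_pole_image by assumption.
  apply (Rdiv_lt_iff _ _ _ Hc2) in Hxy.
  (* [(c x + d)^2 >= (c x)^2 / 2 - d^2] *)
  assert (HT : 0 < T) by (apply Rdiv_lt_0_compat; nra).
  assert (HN : T < (mc h * x + md h)^2 + (mc h * y)^2).
  { pose proof (pow2_ge_0 (mc h * x + 2 * md h)). pose proof (pow2_ge_0 (mc h * y)). nra. }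
  assert (Hce : 0 < mc h ^2 * eps) by nra.
  unfold T in HN. apply (Rdiv_lt_iff _ _ _ Hce) in HN.
  apply Rdiv_lt_iff; nra.
Qed.

(** * Limit points *)

Section LimitSetInvariance.
Variable G : mat -> Prop.
Hypothesis G_det : forall g, G g -> det g = 1.
Hypothesis G_mul : forall g h, G g -> G h -> G (mul g h).

Lemma orbit_ipt_im_pos (m : mat) : G m -> 0 < snd (act m ipt).
Proof. intros Hm. apply (act_im_pos m ipt (G_det m Hm)). unfold inH, ipt; cbn; lra. Qed.

Lemma limit_point_mob (h : mat) (r : R) : G h -> limit_point G (Some r) -> jfac h r <> 0 ->
  limit_point G (Some (mob h r)).
Proof.
  intros Hh Hr Hj eps He.
  destruct (act_near_boundary h r eps (G_det h Hh) Hj He) as [delta [Hdelta Hnear]].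
  destruct (Hr delta Hdelta) as [m [Hm Hmr]].
  exists (mul h m). split; [exact (G_mul h m Hh Hm)|].
  rewrite act_mul_ipt by auto. pose proof (orbit_ipt_im_pos m Hm).
  destruct (act m ipt) as [x y]. apply Hnear; assumption.
Qed.

Lemma limit_point_infty_of_pole (h : mat) (r : R) : G h -> limit_point G (Some r) ->
  jfac h r = 0 -> limit_point G None.
Proof.
  intros Hh Hr Hj M.
  destruct (act_near_pole h r M (G_det h Hh) Hj) as [delta [Hdelta Hnear]].
  destruct (Hr delta Hdelta) as [m [Hm Hmr]].
  exists (mul h m). split; [exact (G_mul h m Hh Hm)|].
  rewrite act_mul_ipt by auto. pose proof (orbit_ipt_im_pos m Hm).
  destruct (act m ipt) as [x y]. apply Rlt_gt, Hnear; assumption.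
Qed.

Lemma limit_point_pole (g : mat) : (forall g, G g -> G (inv g)) ->
  limit_point G None -> G g -> mc g <> 0 -> limit_point G (Some (- md g / mc g)).
Proof.
  intros G_inv Hinf Hg Hc eps He.
  assert (Hdi : det (inv g) = 1) by (rewrite det_inv; exact (G_det g Hg)).
  assert (Hci : mc (inv g) <> 0) by (cbn; lra).
  destruct (act_near_infinity (inv g) eps Hdi Hci He) as [M Hnear].
  destruct (Hinf M) as [m [Hm HmM]].
  exists (mul (inv g) m). split; [exact (G_mul _ m (G_inv g Hg) Hm)|].
  rewrite act_mul_ipt by auto. pose proof (orbit_ipt_im_pos m Hm).
  replace (- md g / mc g) with (ma (inv g) / mc (inv g)) by (cbn; field; exact Hc).
  destruct (act m ipt) as [x y]. apply Hnear; [assumption | exact HmM].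
Qed.

End LimitSetInvariance.

Lemma bounded_no_limit_point (G : mat -> Prop) (K r : R) : (forall m, G m -> det m = 1) ->
  (forall m, G m -> mc m ^2 + md m ^2 <= K) -> ~ limit_point G (Some r).
Proof.
  intros G_det HK Hr. set (K' := Rabs K + 1).
  assert (HK' : 0 < K') by (unfold K'; pose proof (Rabs_pos K); lra).
  destruct (Hr ((1 / K')^2)) as [m [Hm Hmr]]; [apply pow_lt, Rdiv_lt_0_compat; lra|].
  rewrite (act_ipt m (G_det m Hm)) in Hmr. cbn [fst snd] in Hmr.
  pose proof (HK m Hm). pose proof (Rle_abs K).
  assert (Hpos : 0 < mc m ^2 + md m ^2) by (pose proof (act_den_pos m 0 1 (G_det m Hm) Rlt_0_1); nra).
  assert (1 / K' <= 1 / (mc m ^2 + md m ^2))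
    by (unfold Rdiv; rewrite !Rmult_1_l; apply Rinv_le_contravar; unfold K' in *; lra).
  assert (0 < 1 / K') by (apply Rdiv_lt_0_compat; lra).
  pose proof (pow2_ge_0 ((ma m * mc m + mb m * md m) / (mc m ^2 + md m ^2) - r)). nra.
Qed.

(** * Two-sided sequences with [u (k+1) = t u k - u (k-1)] and nondecreasing [|u k|] *)

Section TwoTermRecurrence.
Variables (t : R) (u : Z -> R).
Hypothesis u_rec : forall k, u (k + 1)%Z = t * u k - u (k - 1)%Z.
Hypothesis u_sq_mono : forall k, u k ^2 <= u (k + 1)%Z ^2.

Definition cassini (k : Z) : R := u (k + 1)%Z * u (k - 1)%Z - u k ^2.

Lemma cassini_succ (k : Z) : cassini (k + 1) = cassini k.
Proof.
  unfold cassini. replace (k + 1 - 1)%Z with k by ring.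
  rewrite (u_rec (k + 1)), (u_rec k). replace (k + 1 - 1)%Z with k by ring. ring.
Qed.

Lemma cassini_const (k : Z) : cassini k = cassini 0.
Proof.
  induction k using Z.peano_ind.
  - reflexivity.
  - rewrite <- Z.add_1_r, cassini_succ. exact IHk.
  - rewrite <- IHk, <- (cassini_succ (Z.pred k)). f_equal. lia.
Qed.

Lemma sq_le_shift (n : nat) (k : Z) : u k ^2 <= u (k + Z.of_nat n)%Z ^2.
Proof.
  induction n as [|n IH].
  - rewrite Z.add_0_r. lra.
  - rewrite Nat2Z.inj_succ, <- Z.add_1_r, Z.add_assoc. eapply Rle_trans; [exact IH | apply u_sq_mono].
Qed.

Lemma cassini_nonhyperbolic : t^2 <= 4 -> forall k, (t^2 - 4) * u k ^2 = 2 * cassini 0.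
Proof.
  intros Ht k.
  set (gap j := u (j + 1)%Z ^2 - u j ^2).
  set (excess j := (t^2 - 4) * u j ^2 - 2 * cassini 0).
  assert (gap_nonneg : forall j, 0 <= gap j) by (intros j; unfold gap; pose proof (u_sq_mono j); lra).
  (* [u (j+1) + u (j-1) = t u j] and [u (j+1) u (j-1) = u j ^2 + cassini] *)
  assert (gap_step : forall j, gap j = gap (j - 1)%Z + excess j).
  { intros j. unfold gap, excess. rewrite <- (cassini_const j). unfold cassini.
    replace (j - 1 + 1)%Z with j by ring. rewrite (u_rec j). ring. }
  assert (fwd : forall n : nat, gap (k + Z.of_nat n)%Z <= gap k + INR n * excess k).
  { induction n as [|n IH]; [rewrite Z.add_0_r; cbn; lra|].
    rewrite S_INR, (gap_step (k + Z.of_nat (S n))%Z).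
    replace (k + Z.of_nat (S n) - 1)%Z with (k + Z.of_nat n)%Z by lia.
    assert (excess (k + Z.of_nat (S n))%Z <= excess k)
      by (unfold excess; pose proof (sq_le_shift (S n) k); nra).
    lra. }
  assert (bwd : forall n : nat, gap (k - Z.of_nat n)%Z <= gap k - INR n * excess k).
  { induction n as [|n IH]; [rewrite Z.sub_0_r; cbn; lra|].
    rewrite S_INR. pose proof (gap_step (k - Z.of_nat n)%Z) as E.
    replace (k - Z.of_nat n - 1)%Z with (k - Z.of_nat (S n))%Z in E by lia.
    assert (excess k <= excess (k - Z.of_nat n)%Z).
    { unfold excess. pose proof (sq_le_shift n (k - Z.of_nat n)) as S.
      replace (k - Z.of_nat n + Z.of_nat n)%Z with k in S by ring. nra. }
    lra. }
  enough (excess k = 0) by (unfold excess in *; lra).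
  destruct (Rtotal_order (excess k) 0) as [Hneg|[Hzero|Hpos]]; [exfalso | exact Hzero | exfalso].
  - destruct (INR_unbounded (gap k / - excess k)) as [n Hn].
    assert (Hb : 0 < - excess k) by lra. apply Rgt_lt, (Rdiv_lt_iff _ _ _ Hb) in Hn.
    pose proof (fwd n). pose proof (gap_nonneg (k + Z.of_nat n)%Z). lra.
  - destruct (INR_unbounded (gap k / excess k)) as [n Hn].
    apply Rgt_lt, (Rdiv_lt_iff _ _ _ Hpos) in Hn.
    pose proof (bwd n). pose proof (gap_nonneg (k - Z.of_nat n)%Z). lra.
Qed.

Lemma small_root_exists : 4 < t^2 -> exists rho, rho^2 - t * rho + 1 = 0 /\ rho^2 < 1.
Proof.
  intros Ht. set (D := sqrt (t^2 - 4)).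
  assert (HD : D^2 = t^2 - 4) by (unfold D; rewrite <- Rsqr_pow2, Rsqr_sqrt; lra).
  assert (HD0 : 0 <= D) by apply sqrt_pos.
  destruct (Rlt_or_le 0 t) as [Tp|Tn].
  - exists ((t - D) / 2). split; [field_simplify; nra|].
    assert (2 < t) by nra. assert (D < t) by nra. assert (t - 2 < D) by nra. nra.
  - exists ((t + D) / 2). split; [field_simplify; nra|].
    assert (t < -2) by nra. assert (D < - t) by nra. assert (- t - 2 < D) by nra. nra.
Qed.

Lemma cassini_hyperbolic : 4 < t^2 -> cassini 0 = 0.
Proof.
  intros Ht. destruct small_root_exists as [rho [Hrho Hrho1]]; [exact Ht|].
  set (sigma := t - rho).
  assert (Hs : sigma * rho = 1) by (unfold sigma; nra).
  assert (Hs2 : 1 < sigma^2) by nra.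
  (* along negative indices [u (-n-1) - rho u (-n)] is multiplied by [sigma] at each step *)
  set (w n := u (- Z.of_nat n - 1)%Z - rho * u (- Z.of_nat n)%Z).
  assert (w_succ : forall n, w (S n) = sigma * w n).
  { intros n. unfold w. set (m := (- Z.of_nat n - 1)%Z).
    replace (- Z.of_nat (S n))%Z with m by (unfold m; lia).
    replace (- Z.of_nat n)%Z with (m + 1)%Z by (unfold m; lia).
    pose proof (u_rec m) as E. pose proof (Rmult_eq_compat_r (u (m + 1)%Z) _ _ Hrho).
    unfold sigma. lra. }
  assert (w_pow : forall n, w n ^2 = (sigma^2)^n * w 0%nat ^2).
  { induction n as [|n IH]; [cbn; ring|].
    rewrite w_succ. change ((sigma^2)^(S n)) with (sigma^2 * (sigma^2)^n).
    rewrite Rmult_assoc, <- IH. ring. }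
  assert (w_bounded : forall n, w n ^2 <= 4 * u 0%Z ^2).
  { intros n. unfold w.
    pose proof (sq_le_shift (S n) (- Z.of_nat n - 1)) as S1.
    pose proof (sq_le_shift n (- Z.of_nat n)) as S2.
    replace (- Z.of_nat n - 1 + Z.of_nat (S n))%Z with 0%Z in S1 by lia.
    replace (- Z.of_nat n + Z.of_nat n)%Z with 0%Z in S2 by lia.
    set (A := u (- Z.of_nat n - 1)%Z) in *. set (B := u (- Z.of_nat n)%Z) in *.
    pose proof (pow2_ge_0 (A + rho * B)). pose proof (pow2_ge_0 B). nra. }
  assert (w0 : w 0%nat = 0).
  { destruct (Req_dec (w 0%nat) 0) as [E|E]; [exact E|exfalso].
    pose proof (pow2_gt_0 _ E) as Hw.
    destruct (pow_unbounded (sigma^2) (4 * u 0%Z ^2 / w 0%nat ^2) Hs2) as [n Hn].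
    apply (Rdiv_lt_iff _ _ _ Hw) in Hn.
    pose proof (w_bounded n) as Hb. rewrite w_pow in Hb. lra. }
  unfold w in w0. cbn in w0. unfold cassini. cbn.
  pose proof (u_rec 0) as E. cbn in E. rewrite E.
  replace (u (-1)%Z) with (rho * u 0%Z) by lra. nra.
Qed.

End TwoTermRecurrence.

(** * Orbits of limit points when the limit set avoids W(g) *)

Fixpoint mpow (g : mat) (n : nat) : mat :=
  match n with O => Id2 | S n => mul g (mpow g n) end.

Definition zpow (g : mat) (k : Z) : mat :=
  match k with
  | Z0 => Id2
  | Zpos p => mpow g (Pos.to_nat p)
  | Zneg p => mpow (inv g) (Pos.to_nat p)
  end.

Lemma zpow_of_nat (g : mat) (n : nat) : zpow g (Z.of_nat n) = mpow g n.
Proof. destruct n; [reflexivity|]. cbn [Z.of_nat zpow]. rewrite SuccNat2Pos.id_succ. reflexivity. Qed.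

Lemma zpow_opp_of_nat (g : mat) (n : nat) : zpow g (- Z.of_nat n) = mpow (inv g) n.
Proof.
  destruct n; [reflexivity|]. cbn [Z.of_nat Z.opp zpow]. rewrite SuccNat2Pos.id_succ. reflexivity.
Qed.

Lemma zpow_1 (g : mat) : zpow g 1 = g.
Proof. exact (mul_1_r g). Qed.

Lemma zpow_m1 (g : mat) : zpow g (-1) = inv g.
Proof. exact (mul_1_r (inv g)). Qed.

Lemma zpow_succ (g : mat) (k : Z) : det g = 1 -> zpow g (k + 1) = mul g (zpow g k).
Proof.
  intros Hg. destruct (Z_le_gt_dec 0 k) as [Hk|Hk].
  - replace (k + 1)%Z with (Z.of_nat (S (Z.to_nat k))) by lia.
    replace k with (Z.of_nat (Z.to_nat k)) at 2 by lia.
    rewrite !zpow_of_nat. reflexivity.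
  - replace k with (- Z.of_nat (S (Z.to_nat (- k) - 1)))%Z by lia.
    replace (- Z.of_nat (S (Z.to_nat (- k) - 1)) + 1)%Z with (- Z.of_nat (Z.to_nat (- k) - 1))%Z by lia.
    rewrite !zpow_opp_of_nat. cbn [mpow].
    rewrite <- mul_assoc, mul_inv_r, mul_1_l by exact Hg. reflexivity.
Qed.

Lemma zpow_closed (G : mat -> Prop) (g : mat) : G Id2 -> (forall x y, G x -> G y -> G (mul x y)) ->
  (forall x, G x -> G (inv x)) -> G g -> forall k, G (zpow g k).
Proof.
  intros G1 GM GV Gg k.
  assert (Hpow : forall x n, G x -> G (mpow x n)) by (intros x n Gx; induction n; cbn; auto).
  destruct k; cbn; auto.
Qed.

Lemma large_root_unique (t p q : R) : p * (t - p) = 1 -> q * (t - q) = 1 ->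
  1 <= p^2 -> 1 <= q^2 -> p = q.
Proof.
  intros Hp Hq Hp2 Hq2.
  assert (H : (p - q) * (p + q - t) = 0) by nra.
  apply Rmult_integral in H as [H|H]; [lra|].
  (* otherwise [p] and [q] are the two roots of [X^2 - t X + 1], so [p q = 1] *)
  assert (Hpq : p * q = 1) by (replace q with (t - p) by lra; exact Hp).
  assert (p^2 * q^2 = 1) by (rewrite <- Rpow_mult_distr, Hpq; ring).
  assert (p^2 = 1) by nra. assert (q^2 = 1) by nra.
  nra.
Qed.

Section LimitSetAvoidingW.
Variable G : mat -> Prop.
Hypothesis G_det : forall g, G g -> det g = 1.
Hypothesis G_Id : G Id2.
Hypothesis G_mul : forall g h, G g -> G h -> G (mul g h).
Hypothesis G_inv : forall g, G g -> G (inv g).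
Hypothesis no_infty : ~ limit_point G None.
Variable g : mat.
Hypothesis G_g : G g.
Hypothesis jfac_ge_1 : forall r, limit_point G (Some r) -> 1 <= jfac g r ^2.
Let t : R := ma g + md g.

Section Orbit.
Variable z : R.
Hypothesis z_limit : limit_point G (Some z).

(* [jfac (g^k) z] is the product of the factors [jfac g] along the orbit of [z] *)
Let u (k : Z) : R := jfac (zpow g k) z.

Lemma orbit_jfac_nonzero (k : Z) : jfac (zpow g k) z <> 0.
Proof.
  intros E. apply no_infty.
  exact (limit_point_infty_of_pole G G_det G_mul _ z
           (zpow_closed G g G_Id G_mul G_inv G_g k) z_limit E).
Qed.

Lemma orbit_rec (k : Z) : u (k + 1) = t * u k - u (k - 1).
Proof.
  unfold u, t. pose proof (G_det g G_g) as Hg.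
  rewrite (zpow_succ g k Hg). replace k with (k - 1 + 1)%Z at 1 2 by ring.
  rewrite (zpow_succ g (k - 1) Hg). exact (jfac_cayley_hamilton g _ z Hg).
Qed.

Lemma orbit_sq_mono (k : Z) : u k ^2 <= u (k + 1) ^2.
Proof.
  unfold u. rewrite (zpow_succ g k (G_det g G_g)), jfac_mul by apply orbit_jfac_nonzero.
  assert (Hexp : 1 <= jfac g (mob (zpow g k) z) ^2).
  { apply jfac_ge_1, (limit_point_mob G G_det G_mul).
    - exact (zpow_closed G g G_Id G_mul G_inv G_g k).
    - exact z_limit.
    - apply orbit_jfac_nonzero. }
  pose proof (pow2_ge_0 (jfac (zpow g k) z)). nra.
Qed.

Lemma orbit_u0 : u 0 = 1.
Proof. unfold u, jfac; cbn. ring. Qed.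

Lemma orbit_u1 : u 1 = jfac g z.
Proof. unfold u. rewrite zpow_1. reflexivity. Qed.

Lemma orbit_um1 : u (-1) = ma g - mc g * z.
Proof. unfold u. rewrite zpow_m1. unfold jfac; cbn. ring. Qed.

Lemma orbit_cassini : cassini u 0 = jfac g z * (ma g - mc g * z) - 1.
Proof. unfold cassini. cbn [Z.add Z.sub Z.opp]. rewrite orbit_u0, orbit_u1, orbit_um1. ring. Qed.

(* for [mc g <> 0] this is the fixed-point equation [mob g z = z] *)
Lemma limit_point_fixed_eq : 4 <= t^2 -> jfac g z * (ma g - mc g * z) = 1.
Proof.
  intros Ht. pose proof orbit_cassini as C.
  destruct (Rle_lt_or_eq_dec _ _ Ht) as [Hlt|Heq].
  - pose proof (cassini_hyperbolic t u orbit_rec orbit_sq_mono Hlt). lra.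
  - pose proof (cassini_nonhyperbolic t u orbit_rec orbit_sq_mono (Req_le _ _ (eq_sym Heq)) 0) as B.
    rewrite <- Heq in B. lra.
Qed.

Lemma limit_point_elliptic : t^2 < 4 -> jfac g z ^2 = 1 /\ t = 0.
Proof.
  intros Ht.
  pose proof (cassini_nonhyperbolic t u orbit_rec orbit_sq_mono (Rlt_le _ _ Ht)) as B.
  pose proof (B 1%Z) as B1. pose proof (B 0%Z) as B0. pose proof (B (-1)%Z) as Bm1.
  pose proof (orbit_rec 0) as E. cbn [Z.add Z.sub Z.opp] in E.
  rewrite orbit_u0, orbit_u1, orbit_um1 in *.
  set (p := jfac g z) in *. set (q := ma g - mc g * z) in *.
  assert (Hp : p^2 = 1) by (apply Rmult_eq_reg_l with (t^2 - 4); lra).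
  assert (Hq : q^2 = 1) by (apply Rmult_eq_reg_l with (t^2 - 4); lra).
  assert (Hpq : (p * q - 1) * (p * q + 1) = 0) by nra.
  split; [exact Hp|].
  apply Rmult_integral in Hpq as [Hpq|Hpq]; nra.
Qed.

End Orbit.

Lemma elliptic_limit_set : mc g <> 0 -> t^2 < 4 -> forall r, limit_point G (Some r) ->
  t = 0 /\ (r = (ma g - 1) / mc g \/ r = (ma g + 1) / mc g).
Proof.
  intros Hc Ht r Hr. destruct (limit_point_elliptic r Hr Ht) as [Hj Htr].
  split; [exact Htr|]. unfold jfac in Hj.
  assert (E : (mc g * r + md g - 1) * (mc g * r + md g + 1) = 0) by nra.
  unfold t in Htr. apply Rmult_integral in E as [E|E]; [right|left]; field_simplify_eq; auto; lra.
Qed.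

Lemma nonelliptic_limit_point_unique : mc g <> 0 -> 4 <= t^2 -> forall x y,
  limit_point G (Some x) -> limit_point G (Some y) -> x = y.
Proof.
  intros Hc Ht x y Hx Hy. apply (Rmult_eq_reg_l (mc g)); [|exact Hc].
  assert (Hj : jfac g x = jfac g y).
  { apply (large_root_unique t); [| |apply jfac_ge_1; assumption ..].
    - rewrite <- (limit_point_fixed_eq x Hx Ht). unfold t, jfac. ring.
    - rewrite <- (limit_point_fixed_eq y Hy Ht). unfold t, jfac. ring. }
  unfold jfac in Hj. lra.
Qed.

End LimitSetAvoidingW.

(** * Discrete groups preserving a pair of boundary points *)

Definition mdev (x : mat) : mat := Mat (ma x - 1) (mb x) (mc x) (md x - 1).

Definition mnorm1 (x : mat) : R := Rabs (ma x) + Rabs (mb x) + Rabs (mc x) + Rabs (md x).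

Lemma mnorm1_nonneg (x : mat) : 0 <= mnorm1 x.
Proof.
  unfold mnorm1. pose proof (Rabs_pos (ma x)). pose proof (Rabs_pos (mb x)).
  pose proof (Rabs_pos (mc x)). pose proof (Rabs_pos (md x)). lra.
Qed.

Lemma mnorm1_mul (x y : mat) : mnorm1 (mul x y) <= mnorm1 x * mnorm1 y.
Proof.
  destruct x as [a b c d], y as [a' b' c' d']; unfold mnorm1, mul; cbn.
  pose proof (Rabs_add_mul_le a a' b c'). pose proof (Rabs_add_mul_le a b' b d').
  pose proof (Rabs_add_mul_le c a' d c'). pose proof (Rabs_add_mul_le c b' d d').
  assert (P : forall u v, 0 <= Rabs u * Rabs v) by (intros; apply Rmult_le_pos; apply Rabs_pos).
  pose proof (P a c'). pose proof (P a d'). pose proof (P b a'). pose proof (P b b').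
  pose proof (P c c'). pose proof (P c d'). pose proof (P d a'). pose proof (P d b').
  lra.
Qed.

Lemma mdev_conjg (h x : mat) : det h = 1 -> mdev (conjg h x) = conjg h (mdev x).
Proof.
  destruct h as [a b c d], x; unfold det, mdev, conjg, mul, inv; cbn. intros Hd.
  apply mat_ext; cbn; nra.
Qed.

Lemma Fuchsian_conjg (G : mat -> Prop) (h : mat) : Fuchsian G -> det h = 1 ->
  Fuchsian (fun x => G (conjg (inv h) x)).
Proof.
  intros [G_det [G_Id [G_mul [G_inv [G_neg [eps [Heps G_disc]]]]]]] Hh.
  assert (Hh' : det (inv h) = 1) by (rewrite det_inv; exact Hh).
  split; [|split; [|split; [|split; [|split]]]].
  - intros x Hx. rewrite <- (det_conjg (inv h) Hh' x). exact (G_det _ Hx).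
  - rewrite conjg_Id by exact Hh'. exact G_Id.
  - intros x y Hx Hy. rewrite conjg_mul by exact Hh'. exact (G_mul _ _ Hx Hy).
  - intros x Hx. rewrite conjg_inv. exact (G_inv _ Hx).
  - intros x Hx. rewrite conjg_neg. exact (G_neg _ Hx).
  - set (K := mnorm1 (inv h) * mnorm1 h + 1).
    pose proof (mnorm1_nonneg h) as N1. pose proof (mnorm1_nonneg (inv h)) as N2.
    assert (HK : 1 <= K) by (unfold K; nra).
    exists (eps / (4 * K)). split; [apply Rdiv_lt_0_compat; lra|].
    intros x Hx H1 H2 H3 H4. set (y := conjg (inv h) x) in Hx.
    assert (Hx_small : mnorm1 (mdev x) * K < eps).
    { assert (H4K : 0 < 4 * K) by lra.
      apply (Rlt_div_iff _ _ _ H4K) in H1, H2, H3, H4.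
      unfold mnorm1, mdev; cbn. lra. }
    assert (Hy_bound : mnorm1 (mdev y) <= mnorm1 (inv h) * mnorm1 (mdev x) * mnorm1 h).
    { unfold y. rewrite mdev_conjg by exact Hh'. unfold conjg at 1. rewrite inv_involutive.
      eapply Rle_trans; [apply mnorm1_mul|].
      apply Rmult_le_compat_r; [exact N1 | apply mnorm1_mul]. }
    assert (Hy_small : mnorm1 (mdev y) < eps)
      by (pose proof (mnorm1_nonneg (mdev x)); unfold K in Hx_small; nra).
    assert (Hy : y = Id2).
    { unfold mnorm1, mdev in Hy_small; cbn [ma mb mc md] in Hy_small.
      pose proof (Rabs_pos (ma y - 1)). pose proof (Rabs_pos (mb y)).
      pose proof (Rabs_pos (mc y)). pose proof (Rabs_pos (md y - 1)).
      apply G_disc; [exact Hx | lra | lra | lra | lra]. }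
    unfold y in Hy. rewrite <- (conjgVK h Hh x), Hy. exact (conjg_Id h Hh).
Qed.

Definition diagonal (m : mat) : Prop := mb m = 0 /\ mc m = 0.
Definition antidiagonal (m : mat) : Prop := ma m = 0 /\ md m = 0.

Definition Smat : mat := Mat 0 (-1) 1 0.
Definition dg (r : R) : mat := Mat r 0 0 (/ r).

Lemma dg_1 : dg 1 = Id2.
Proof. unfold dg. apply mat_ext; cbn; [reflexivity..| apply Rinv_1]. Qed.
Lemma dg_mul (r s : R) : r <> 0 -> s <> 0 -> mul (dg r) (dg s) = dg (r * s).
Proof. intros. unfold dg, mul. apply mat_ext; cbn; field; auto. Qed.
Lemma dg_inv (r : R) : r <> 0 -> inv (dg r) = dg (/ r).
Proof. intros. unfold dg, inv. apply mat_ext; cbn; try field; auto. Qed.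
Lemma neg_dg (r : R) : r <> 0 -> neg (dg r) = dg (- r).
Proof. intros. unfold dg, neg. apply mat_ext; cbn; try field; auto. Qed.

Lemma diagonal_dg (m : mat) : det m = 1 -> diagonal m -> m = dg (ma m) /\ ma m <> 0.
Proof.
  destruct m as [a b c d]; unfold det, diagonal, dg; cbn. intros Hd [Hb Hc]; subst b c.
  assert (a <> 0) by (intros ->; lra).
  split; [apply mat_ext; cbn; [..|field_simplify_eq]; lra | assumption].
Qed.

Lemma antidiagonal_mul_invS (m : mat) : antidiagonal m -> diagonal (mul m (inv Smat)).
Proof.
  destruct m as [a b c d]; unfold antidiagonal, diagonal; cbn. intros [Ha Hd]; subst a d.
  split; ring.
Qed.

Lemma det_Smat : det Smat = 1.
Proof. unfold det, Smat; cbn. ring. Qed.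

Lemma gen_SD_neg (lam : R) (m : mat) : gen_SD lam m -> gen_SD lam (neg m).
Proof. intros Hm. rewrite neg_eq_mul. exact (gen_mul lam _ _ (gen_negid lam) Hm). Qed.

Section DihedralClassification.
Variable H : mat -> Prop.
Hypothesis H_fuchsian : Fuchsian H.
Hypothesis H_shape : forall m, H m -> diagonal m \/ antidiagonal m.
Hypothesis H_S : H Smat.

Let H_det : forall m, H m -> det m = 1 := proj1 H_fuchsian.
Let H_Id : H Id2 := proj1 (proj2 H_fuchsian).
Let H_mul : forall m n, H m -> H n -> H (mul m n) := proj1 (proj2 (proj2 H_fuchsian)).
Let H_inv : forall m, H m -> H (inv m) := proj1 (proj2 (proj2 (proj2 H_fuchsian))).
Let H_neg : forall m, H m -> H (neg m) := proj1 (proj2 (proj2 (proj2 (proj2 H_fuchsian)))).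

Definition dilation_in (r : R) : Prop := 1 < r /\ H (dg r).

Lemma dilation_gap : exists eta, 0 < eta /\ forall r, dilation_in r -> 1 + eta <= r.
Proof.
  pose proof H_fuchsian as (_ & _ & _ & _ & _ & eps & Heps & H_disc).
  exists eps. split; [exact Heps|]. intros r [Hr Hdg].
  destruct (Rle_or_lt (1 + eps) r) as [Hle|Hlt]; [exact Hle|exfalso].
  assert (Hinv : 0 < / r < 1)
    by (split; [apply Rinv_0_lt_compat | rewrite <- Rinv_1; apply Rinv_lt_contravar]; lra).
  assert (Hrr : 1 - / r <= r - 1).
  { assert (r * / r = 1) by (field; lra).
    pose proof (Rmult_le_pos _ _ (pow2_ge_0 (r - 1)) (Rlt_le _ _ (proj1 Hinv))). nra. }
  assert (E : dg r = Id2).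
  { apply H_disc; [exact Hdg | ..]; cbn; rewrite ?Rabs_R0, ?Rabs_right, ?Rabs_left1 by lra; lra. }
  apply (f_equal ma) in E. cbn in E. lra.
Qed.

Lemma dg_closed_div (r s : R) : r <> 0 -> s <> 0 -> H (dg r) -> H (dg s) -> H (dg (r / s)).
Proof.
  intros Hr Hs HHr HHs. unfold Rdiv. rewrite <- dg_mul, <- dg_inv by auto using Rinv_neq_0_compat.
  apply H_mul, H_inv; assumption.
Qed.

Lemma dg_closed_abs (r : R) : r <> 0 -> H (dg r) -> H (dg (Rabs r)).
Proof.
  intros Hr HHr. unfold Rabs. destruct (Rcase_abs r); [|exact HHr].
  rewrite <- neg_dg by exact Hr. apply H_neg, HHr.
Qed.

Lemma dilation_min : (exists r, dilation_in r) ->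
  exists a, dilation_in a /\ forall r, dilation_in r -> a <= r.
Proof.
  intros [r0 Hr0]. destruct dilation_gap as [eta [Heta Hgap]].
  (* the infimum of the dilations is minus the supremum of their opposites *)
  set (E x := dilation_in (- x)).
  assert (E_bound : bound E) by (exists (-1); intros x [Hx _]; lra).
  assert (E_nonempty : exists x, E x) by (exists (- r0); unfold E; rewrite Ropp_involutive; exact Hr0).
  destruct (completeness E E_bound E_nonempty) as [m [Hub Hlub]].
  set (a := - m).
  assert (a_lower : forall r, dilation_in r -> a <= r).
  { intros r Hr. assert (- r <= m) by (apply Hub; unfold E; rewrite Ropp_involutive; exact Hr).
    unfold a; lra. }
  assert (a_large : 1 + eta <= a).
  { assert (m <= - (1 + eta)) by (apply Hlub; intros x Hx; pose proof (Hgap _ Hx); lra).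
    unfold a; lra. }
  assert (a_approx : forall th, 0 < th -> exists r, dilation_in r /\ r < a + th).
  { intros th Hth. apply NNPP. intros Hno.
    assert (m <= - a - th).
    { apply Hlub. intros x Hx. destruct (Rlt_or_le (- x) (a + th)) as [Hlt|Hle]; [|lra].
      exfalso. apply Hno. exists (- x). split; [exact Hx | exact Hlt]. }
    unfold a in *; lra. }
  exists a. split; [|exact a_lower].
  destruct (a_approx (a * eta)) as [r [Hr Hr_lt]]; [nra|].
  destruct (Req_dec r a) as [<-|Hne]; [exact Hr|exfalso].
  assert (Har : a < r) by (pose proof (a_lower r Hr); lra).
  destruct (a_approx (r - a)) as [r' [Hr' Hr'_lt]]; [lra|].
  pose proof (a_lower r' Hr').
  (* two dilations closer than the gap give a dilation too close to 1 *)
  assert (Hq : dilation_in (r / r')).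
  { destruct Hr as [R1 R2], Hr' as [R1' R2']. split.
    - apply Rlt_div_iff; lra.
    - apply dg_closed_div; auto; lra. }
  pose proof (Hgap _ Hq).
  assert (r / r' <= r / a)
    by (unfold Rdiv; apply Rmult_le_compat_l; [destruct Hr; lra | apply Rinv_le_contravar; lra]).
  assert (r / a < 1 + eta) by (apply Rdiv_lt_iff; lra).
  lra.
Qed.

Section MinimalDilation.
Variable a : R.
Hypothesis a_dilation : dilation_in a.
Hypothesis a_min : forall r, dilation_in r -> a <= r.

Lemma dilation_pow_below (N : nat) : forall r, 1 <= r < a ^ N -> H (dg r) -> exists n, r = a ^ n.
Proof.
  destruct a_dilation as [Ha1 Ha].
  induction N as [|N IH]; intros r [Hr1 HrN] Hr; [cbn in HrN; lra|].
  destruct (Rlt_or_le r a) as [Hlt|Hle].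
  - exists 0%nat. cbn. destruct (Rle_lt_or_eq_dec 1 r Hr1) as [Hgt|E]; [exfalso|auto].
    pose proof (a_min r (conj Hgt Hr)). lra.
  - destruct (IH (r / a)) as [n Hn].
    + cbn in HrN. split; [|apply Rdiv_lt_iff; lra].
      unfold Rdiv. rewrite <- (Rinv_r a) by lra.
      apply Rmult_le_compat_r; [left; apply Rinv_0_lt_compat|]; lra.
    + apply dg_closed_div; auto; lra.
    + exists (S n). cbn. rewrite <- Hn. field. lra.
Qed.

Lemma dilation_pow (r : R) : 0 < r -> H (dg r) -> exists n, r = a ^ n \/ r = / a ^ n.
Proof.
  destruct a_dilation as [Ha1 _]. intros Hr HHr.
  destruct (Rle_or_lt 1 r) as [Hge|Hlt].
  - destruct (pow_unbounded a r Ha1) as [N HN].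
    destruct (dilation_pow_below N r) as [n Hn]; [lra | exact HHr |].
    exists n. left. exact Hn.
  - assert (Hinv : 1 < / r) by (rewrite <- Rinv_1; apply Rinv_lt_contravar; lra).
    destruct (pow_unbounded a (/ r) Ha1) as [N HN].
    destruct (dilation_pow_below N (/ r)) as [n Hn]; [lra | |].
    + rewrite <- dg_inv by lra. apply H_inv, HHr.
    + exists n. right. rewrite <- Hn, Rinv_inv. reflexivity.
Qed.

Lemma gen_SD_dg_pow (n : nat) : gen_SD (a ^ 2) (dg (a ^ n)).
Proof.
  destruct a_dilation as [Ha1 _].
  induction n as [|n IH]; cbn [pow].
  - rewrite dg_1. apply gen_id.
  - rewrite <- dg_mul by (try apply pow_nonzero; lra). apply gen_mul; [|exact IH].
    replace (dg a) with (Mat (sqrt (a ^ 2)) 0 0 (/ sqrt (a ^ 2)))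
      by (rewrite sqrt_pow2 by lra; reflexivity).
    apply gen_D.
Qed.

Lemma gen_SD_of_diagonal (m : mat) : H m -> diagonal m -> gen_SD (a ^ 2) m.
Proof.
  destruct a_dilation as [Ha1 _]. intros Hm Hdiag.
  destruct (diagonal_dg m (H_det m Hm) Hdiag) as [Em Hr]. set (r := ma m) in *.
  assert (Habs : gen_SD (a ^ 2) (dg (Rabs r))).
  { rewrite Em in Hm. destruct (dilation_pow (Rabs r)) as [n [En|En]];
      [apply Rabs_pos_lt, Hr | apply dg_closed_abs; assumption | |]; rewrite En.
    - apply gen_SD_dg_pow.
    - rewrite <- dg_inv by (apply pow_nonzero; lra). apply gen_inv, gen_SD_dg_pow. }
  rewrite Em. unfold Rabs in Habs. destruct (Rcase_abs r); [|exact Habs].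
  replace r with (- - r) by ring. rewrite <- neg_dg by lra. apply gen_SD_neg, Habs.
Qed.

Lemma H_of_gen_SD (m : mat) : gen_SD (a ^ 2) m -> H m.
Proof.
  destruct a_dilation as [Ha1 Ha]. induction 1.
  - exact H_Id.
  - rewrite negId2_eq. apply H_neg, H_Id.
  - exact H_S.
  - rewrite sqrt_pow2 by lra. exact Ha.
  - apply H_mul; assumption.
  - apply H_inv; assumption.
Qed.

End MinimalDilation.
Lemma diagonal_trivial (m : mat) : (forall r, ~ dilation_in r) -> H m -> diagonal m ->
  m = Id2 \/ m = negId2.
Proof.
  intros Hno Hm Hdiag. destruct (diagonal_dg m (H_det m Hm) Hdiag) as [Em Hr]. set (r := ma m) in *.
  rewrite Em in Hm |- *. pose proof (dg_closed_abs r Hr Hm) as Habs.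
  assert (Hpos : 0 < Rabs r) by (apply Rabs_pos_lt, Hr).
  destruct (Rtotal_order (Rabs r) 1) as [Hlt|[Heq|Hgt]].
  - exfalso. apply (Hno (/ Rabs r)). split.
    + rewrite <- Rinv_1. apply Rinv_lt_contravar; lra.
    + rewrite <- dg_inv by lra. apply H_inv, Habs.
  - unfold Rabs in Heq. destruct (Rcase_abs r).
    + right. replace r with (-1) by lra. unfold dg, negId2. apply mat_ext; cbn; [..|field]; lra.
    + left. rewrite Heq, dg_1. reflexivity.
  - exfalso. exact (Hno _ (conj Hgt Habs)).
Qed.

Theorem dihedral_classification :
  (forall m, H m -> m = Id2 \/ m = negId2 \/ m = Smat \/ m = neg Smat) \/
  exists lam, 1 < lam /\ forall m, H m <-> gen_SD lam m.
Proof.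
  assert (antidiag_split : forall m, H m -> antidiagonal m ->
            H (mul m (inv Smat)) /\ diagonal (mul m (inv Smat)) /\ m = mul (mul m (inv Smat)) Smat).
  { intros m Hm Hanti. split; [apply H_mul, H_inv; assumption|].
    split; [apply antidiagonal_mul_invS, Hanti|].
    rewrite mul_assoc, mul_inv_l, mul_1_r by exact det_Smat. reflexivity. }
  destruct (classic (exists r, dilation_in r)) as [Hdil|Hno].
  - right. destruct (dilation_min Hdil) as [a [Ha Hmin]].
    exists (a ^ 2). split; [destruct Ha; nra|]. intros m. split; [|apply (H_of_gen_SD a Ha)].
    intros Hm. destruct (H_shape m Hm) as [Hdiag|Hanti].
    { exact (gen_SD_of_diagonal a Ha Hmin m Hm Hdiag). }
    destruct (antidiag_split m Hm Hanti) as (Hd & Hdiag & ->).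
    apply gen_mul; [exact (gen_SD_of_diagonal a Ha Hmin _ Hd Hdiag) | apply gen_S].
  - left. assert (Hnone : forall r, ~ dilation_in r) by (intros r Hr; apply Hno; exists r; exact Hr).
    intros m Hm. destruct (H_shape m Hm) as [Hdiag|Hanti].
    + destruct (diagonal_trivial m Hnone Hm Hdiag) as [E|E]; auto.
    + destruct (antidiag_split m Hm Hanti) as (Hd & Hdiag & ->).
      destruct (diagonal_trivial _ Hnone Hd Hdiag) as [-> | ->].
      * right; right; left. apply mul_1_l.
      * right; right; right. rewrite <- neg_eq_mul. reflexivity.
Qed.

End DihedralClassification.

Definition pair_normalizer (al p q : R) : mat := Mat al (- al * p) (- al) (al * q).

Section PairNormalizer.
Variables al p q : R.
Let h := pair_normalizer al p q.

Lemma det_pair_normalizer : det h = al ^2 * (q - p).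
Proof. unfold h, pair_normalizer, det; cbn. ring. Qed.

Lemma conjg_pair_normalizer (m : mat) :
  conjg h m = Mat (al^2 * (ma m * q + mb m - p * jfac m q))
                  (al^2 * (ma m * p + mb m - p * jfac m p))
                  (- al^2 * (ma m * q + mb m - q * jfac m q))
                  (- al^2 * (ma m * p + mb m - q * jfac m p)).
Proof. destruct m; unfold h, pair_normalizer, conjg, mul, inv, jfac; apply mat_ext; cbn; ring. Qed.

Lemma conjg_pair_normalizer_fix (m : mat) : jfac m p <> 0 -> jfac m q <> 0 ->
  mob m p = p -> mob m q = q -> diagonal (conjg h m).
Proof.
  intros Hp Hq Ep Eq. unfold diagonal. rewrite conjg_pair_normalizer; cbn.
  rewrite (mob_eq m p p Hp Ep), (mob_eq m q q Hq Eq). split; ring.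
Qed.

Lemma conjg_pair_normalizer_swap (m : mat) : jfac m p <> 0 -> jfac m q <> 0 ->
  mob m p = q -> mob m q = p -> antidiagonal (conjg h m).
Proof.
  intros Hp Hq Ep Eq. unfold antidiagonal. rewrite conjg_pair_normalizer; cbn.
  rewrite (mob_eq m p q Hp Ep), (mob_eq m q p Hq Eq). split; ring.
Qed.

End PairNormalizer.

Section EllipticSwap.
Variable G : mat -> Prop.
Hypothesis G_fuchsian : Fuchsian G.
Hypothesis no_infty : ~ limit_point G None.
Variable g : mat.
Hypothesis G_g : G g.
Hypothesis c_pos : 0 < mc g.
Hypothesis trace0 : ma g + md g = 0.
Let p := (ma g - 1) / mc g.
Let q := (ma g + 1) / mc g.
Hypothesis p_limit : limit_point G (Some p).
Hypothesis q_limit : limit_point G (Some q).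
Hypothesis limit_pq : forall r, limit_point G (Some r) -> r = p \/ r = q.

Let G_det : forall m, G m -> det m = 1 := proj1 G_fuchsian.
Let G_mul : forall m n, G m -> G n -> G (mul m n) := proj1 (proj2 (proj2 G_fuchsian)).
(* [h] sends [p] to 0 and [q] to infinity; the scale [sqrt (c / 2)] makes [h g h^-1 = Smat]. *)
Let h := pair_normalizer (sqrt (mc g / 2)) p q.

Lemma sqrt_half_c_sq : sqrt (mc g / 2) ^2 = mc g / 2.
Proof. rewrite <- Rsqr_pow2, Rsqr_sqrt; lra. Qed.

Lemma det_h : det h = 1.
Proof.
  unfold h. rewrite det_pair_normalizer, sqrt_half_c_sq. unfold p, q. field. lra.
Qed.

Lemma limit_jfac_nonzero (m : mat) (r : R) : G m -> limit_point G (Some r) -> jfac m r <> 0.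
Proof. intros Hm Hr E. exact (no_infty (limit_point_infty_of_pole G G_det G_mul m r Hm Hr E)). Qed.

Lemma limit_pair_perm (m : mat) : G m ->
  (mob m p = p /\ mob m q = q) \/ (mob m p = q /\ mob m q = p).
Proof.
  intros Hm.
  pose proof (limit_jfac_nonzero m p Hm p_limit) as Hp.
  pose proof (limit_jfac_nonzero m q Hm q_limit) as Hq.
  assert (Hpq : p <> q)
    by (unfold p, q; intros E; apply Rmult_eq_reg_r in E; [lra | apply Rinv_neq_0_compat; lra]).
  assert (Hne : mob m p <> mob m q)
    by (intros E; exact (Hpq (mob_injective m p q (G_det m Hm) Hp Hq E))).
  destruct (limit_pq _ (limit_point_mob G G_det G_mul m p Hm p_limit Hp)) as [Ep|Ep];
  destruct (limit_pq _ (limit_point_mob G G_det G_mul m q Hm q_limit Hq)) as [Eq|Eq];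
  rewrite ?Ep, ?Eq in Hne; tauto.
Qed.

Lemma conjg_h_g : conjg h g = Smat.
Proof.
  pose proof (G_det g G_g) as Hd. unfold h. rewrite conjg_pair_normalizer, sqrt_half_c_sq.
  unfold p, q, jfac, Smat. destruct g as [a b c d]; unfold det in Hd; cbn in *.
  assert (Ed : d = - a) by lra. subst d.
  assert (Eb : b = (-1 - a^2) / c) by (field_simplify_eq; lra). subst b.
  apply mat_ext; cbn; field; lra.
Qed.

Theorem elliptic_swap_dihedral : exists lam, 1 < lam /\ conjugate G (gen_SD lam).
Proof.
  set (H := fun x => G (conjg (inv h) x)).
  assert (H_shape : forall x, H x -> diagonal x \/ antidiagonal x).
  { intros x Hx. rewrite <- (conjgVK h det_h x).
    pose proof (limit_jfac_nonzero _ p Hx p_limit). pose proof (limit_jfac_nonzero _ q Hx q_limit).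
    destruct (limit_pair_perm _ Hx) as [[Ep Eq]|[Ep Eq]];
      [left; apply conjg_pair_normalizer_fix | right; apply conjg_pair_normalizer_swap]; assumption. }
  assert (H_S : H Smat) by (unfold H; rewrite <- conjg_h_g, conjgK by exact det_h; exact G_g).
  destruct (dihedral_classification H (Fuchsian_conjg G h G_fuchsian det_h) H_shape H_S)
    as [Hfinite|[lam [Hlam HH]]].
  - exfalso. apply (bounded_no_limit_point G (1 + mc g ^2 + md g ^2) p G_det); [|exact p_limit].
    intros m Hm. assert (Hm' : H (conjg h m)) by (unfold H; rewrite conjgK by exact det_h; exact Hm).
    pose proof (pow2_ge_0 (mc g)). pose proof (pow2_ge_0 (md g)).
    rewrite <- (conjgK h det_h m).
    destruct (Hfinite _ Hm') as [-> | [-> | [-> | ->]]];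
      [rewrite conjg_Id | rewrite negId2_eq, conjg_neg, conjg_Id | rewrite <- conjg_h_g, conjgK
      | rewrite conjg_neg, <- conjg_h_g, conjgK];
      rewrite ?det_inv; try exact det_h; cbn; lra.
  - exists lam. split; [exact Hlam|]. exists h. split; [exact det_h|].
    intros m. rewrite <- HH. unfold H. fold (conjg h m). rewrite conjgK by exact det_h. reflexivity.
Qed.

End EllipticSwap.

Lemma swap_pair_dihedral (G : mat -> Prop) (g : mat) (x y : R) : Fuchsian G ->
  ~ limit_point G None -> G g -> mc g <> 0 -> ma g + md g = 0 ->
  (forall r, limit_point G (Some r) -> r = (ma g - 1) / mc g \/ r = (ma g + 1) / mc g) ->
  x <> y -> limit_point G (Some x) -> limit_point G (Some y) ->
  exists lam, 1 < lam /\ conjugate G (gen_SD lam).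
Proof.
  intros HF Hinf Hg Hc Htr Hpq Hxy Hx Hy.
  assert (Both : forall p q, (forall r, limit_point G (Some r) -> r = p \/ r = q) ->
            limit_point G (Some p) /\ limit_point G (Some q)).
  { intros p q Hpq0. destruct (Hpq0 x Hx) as [<-|<-]; destruct (Hpq0 y Hy) as [<-|<-]; tauto. }
  destruct (Rlt_or_le 0 (mc g)) as [Hpos|Hneg].
  - destruct (Both _ _ Hpq) as [Hp Hq].
    exact (elliptic_swap_dihedral G HF Hinf g Hg Hpos Htr Hp Hq Hpq).
  - set (g' := neg g).
    assert (E1 : (ma g' - 1) / mc g' = (ma g + 1) / mc g) by (unfold g'; cbn; field; exact Hc).
    assert (E2 : (ma g' + 1) / mc g' = (ma g - 1) / mc g) by (unfold g'; cbn; field; exact Hc).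
    assert (Hpq' : forall r, limit_point G (Some r) ->
                     r = (ma g' - 1) / mc g' \/ r = (ma g' + 1) / mc g')
      by (intros r Hr; rewrite E1, E2; destruct (Hpq r Hr); tauto).
    destruct (Both _ _ Hpq') as [Hp Hq].
    apply (elliptic_swap_dihedral G HF Hinf g'); [| | |exact Hp | exact Hq | exact Hpq'].
    + exact (proj1 (proj2 (proj2 (proj2 (proj2 HF)))) g Hg).
    + unfold g'; cbn. destruct Hneg; [lra | contradiction].
    + unfold g'; cbn. lra.
Qed.

Theorem lemma2p2 (G : mat -> Prop) :
  Fuchsian G ->
  geometrically_finite G ->
  ~ in_Rst G None ->
  ~ (exists lam, 1 < lam /\ conjugate G (gen_SD lam)) ->
  (exists x y : Rhat, x <> y /\ limit_point G x /\ limit_point G y) ->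
  forall g, G g -> mc g <> 0 ->
    exists x : R, in_W g x /\ limit_point G (Some x).
Proof.
  intros HF _ _ Hnot Hxy g Hg Hc.
  pose proof HF as (G_det & G_Id & G_mul & G_inv & _).
  destruct (classic (limit_point G None)) as [Hinf|Hinf].
  { exists (- md g / mc g). split.
    - apply in_W_of_jfac_sq_lt_1; [exact Hc|]. unfold jfac.
      replace (mc g * (- md g / mc g) + md g) with 0 by (field; exact Hc). lra.
    - exact (limit_point_pole G G_det G_mul g G_inv Hinf Hg Hc). }
  apply NNPP. intros Hno.
  assert (jfac_ge_1 : forall r, limit_point G (Some r) -> 1 <= jfac g r ^2).
  { intros r Hr. apply Rnot_lt_le. intros Hlt. apply Hno. exists r. split; [|exact Hr].
    exact (in_W_of_jfac_sq_lt_1 g r Hc Hlt). }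
  destruct Hxy as [[x|] [[y|] [Hne [Hx Hy]]]]; try contradiction.
  assert (Hxy : x <> y) by congruence.
  destruct (Rlt_or_le ((ma g + md g)^2) 4) as [Hell|Hnonell].
  - pose proof (elliptic_limit_set G G_det G_Id G_mul G_inv Hinf g Hg jfac_ge_1 Hc Hell) as Hpq.
    apply Hnot, (swap_pair_dihedral G g x y HF Hinf Hg Hc (proj1 (Hpq x Hx))); [|assumption..].
    intros r Hr. exact (proj2 (Hpq r Hr)).
  - exact (Hxy (nonelliptic_limit_point_unique G G_det G_Id G_mul G_inv Hinf g Hg jfac_ge_1
                  Hc Hnonell x y Hx Hy)).
Qed.
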